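(* Let $n$ be a non-negative integer and $r,s\in\mathbb{C}\setminus\mathbb{Z}^{-}$ with $s\neq0$ and $r-s\notin\mathbb{Z}^{-}$. Then \[ \begin{aligned} &\sum_{k=0}^{n}\binom{n}{k}\frac{H_{k+s}-H_{n-k+r-s}}{(k+2)(k+s)\binom{n+r}{k+s}}-\sum_{k=0}^{n}\binom{n}{k}\frac{1}{(k+2)(k+s)^2\binom{n+r}{k+s}}\\ &\quad=\sum_{k=0}^{n}\binom{n}{k}\frac{(-1)^k(H_{k+s}-H_{r-s})}{(k+1)(k+2)(k+s)\binom{k+r}{k+s}}-\sum_{k=0}^{n}\binom{n}{k}\frac{(-1)^k}{(k+1)(k+2)(k+s)^2\binom{k+r}{k+s}}. \end{aligned} \]
   Context: $\mathbb{Z}^{-}$ denotes the set of negative integers. For complex $z$ not a negative integer, $H_z=\psi(z+1)+\gamma$ ($\psi$ the digamma function, $\gamma$ Euler's constant). Binomial coefficients with complex entries: $\binom{x}{y}=\frac{\Gamma(x+1)}{\Gamma(y+1)\Gamma(x-y+1)}$. *)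

From Stdlib Require Import Reals.
From Coquelicot Require Import Coquelicot.
Open Scope R_scope.

Definition Clim (u : nat -> C) : C :=
  (real (Lim_seq (fun m => Re (u m))), real (Lim_seq (fun m => Im (u m)))).

(* m^z for a positive integer m and complex z: exp (z * ln m). *)
Definition cpow_nat (m : nat) (z : C) : C :=
  (exp (Re z * ln (INR m)) * cos (Im z * ln (INR m)),
   exp (Re z * ln (INR m)) * sin (Im z * ln (INR m))).

Fixpoint rising_prod (z : C) (m : nat) : C :=
  match m with
  | O => z
  | S m' => Cmult (rising_prod z m') (Cplus z (RtoC (INR m)))
  end.

(* Euler's Gamma function via Gauss's limit formula (valid off the poles). *)
Definition CGamma (z : C) : C :=
  Clim (fun m => Cdiv (Cmult (RtoC (INR (Factorial.fact m))) (cpow_nat m z))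
                      (rising_prod z m)).

(* H_z = psi(z+1) + gamma, via the series  sum_{j>=1} z / (j (j+z)). *)
Definition CH (z : C) : C :=
  let t := fun j : nat => Cdiv z (Cmult (RtoC (INR (S j))) (Cplus (RtoC (INR (S j))) z)) in
  (Series (fun j => Re (t j)), Series (fun j => Im (t j))).

Definition Cbinom (x y : C) : C :=
  Cdiv (CGamma (Cplus x (RtoC 1)))
       (Cmult (CGamma (Cplus y (RtoC 1))) (CGamma (Cplus (Cminus x y) (RtoC 1)))).

Fixpoint Csum (n : nat) (f : nat -> C) : C :=
  match n with
  | O => f O
  | S n' => Cplus (Csum n' f) (f n)
  end.

Definition is_neg_int (z : C) : Prop := exists m : nat, z = RtoC (- INR (S m)).

(** The binomials are expanded with [Γ(z + k) = Γ(z) (z)_k] and the harmonic numbers with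
    [H_(z+k) = H_z + Σ_(j<k) 1/(z+1+j)].  After a common factor is pulled out, the two sides
    of the theorem become [X·A + A'] and [X·B + B'], where [A + A'ε] and [B + B'ε] are the two
    sides of the Pochhammer identity
      [Σ_k C(n,k) (s)_k (c)_(n-k) / (k+p+1) = Σ_j C(n,j) (-1)^j B(p+1,j+1) (s)_j (s+c+j)_(n-j)]
    evaluated at the dual numbers [s + ε], [c - ε] (with [c = r - s + 1], [p = 1]): the
    [ε]-part of a Pochhammer symbol is its logarithmic derivative, a harmonic sum.  Both sides
    of the identity obey the same recursion in [n] coming from Pascal's rule.  The only
    analysis needed is the two shift rules [Γ(z+1) = z Γ(z)] for Gauss's limit (a convergent
    infinite product) and [H_(z+1) = H_z + 1/(z+1)] for the defining series (a telescoping
    sum). *)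

From Stdlib Require Import Reals Lra Lia Factorial Arith Classical_Prop.
From Coquelicot Require Import Coquelicot.
Open Scope R_scope.

(** * Dual numbers and a Pochhammer identity *)

Definition dual : Type := (C * C)%type.

Definition dual_add (x y : dual) : dual := (fst x + fst y, snd x + snd y)%C.
Definition dual_mul (x y : dual) : dual :=
  (fst x * fst y, fst x * snd y + snd x * fst y)%C.
Definition dual_opp (x : dual) : dual := (- fst x, - snd x)%C.
Definition dual_sub (x y : dual) : dual := dual_add x (dual_opp y).
Definition dual0 : dual := (RtoC 0, RtoC 0).
Definition dual1 : dual := (RtoC 1, RtoC 0).
Definition dualR (x : R) : dual := (RtoC x, RtoC 0).

Lemma dual_ring_theory :
  ring_theory dual0 dual1 dual_add dual_mul dual_sub dual_opp (@eq dual).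
Proof.
  split; intros; repeat match goal with x : dual |- _ => destruct x end;
    apply injective_projections; simpl; ring.
Qed.

Add Ring dual_ring : dual_ring_theory.

Lemma dualR_add (x y : R) : dualR (x + y) = dual_add (dualR x) (dualR y).
Proof. unfold dualR, dual_add; simpl; rewrite RtoC_plus; f_equal; ring. Qed.

Lemma dualR_mul (x y : R) : dualR (x * y) = dual_mul (dualR x) (dualR y).
Proof. unfold dualR, dual_mul; simpl; rewrite RtoC_mult; f_equal; ring. Qed.

Lemma dualR_sub (x y : R) : dualR (x - y) = dual_sub (dualR x) (dualR y).
Proof. unfold dualR, dual_sub, dual_add, dual_opp; simpl; rewrite RtoC_minus; f_equal; ring. Qed.

Lemma dualR_m1 : dualR (-1) = dual_opp dual1.
Proof. apply injective_projections; apply injective_projections; simpl; ring. Qed.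

Fixpoint dual_sum (n : nat) (f : nat -> dual) : dual :=
  match n with O => dual0 | S m => dual_add (dual_sum m f) (f m) end.

Lemma dual_sum_ext (n : nat) (f g : nat -> dual) :
  (forall k, (k < n)%nat -> f k = g k) -> dual_sum n f = dual_sum n g.
Proof.
  induction n as [|n IH]; intros Hfg; simpl; auto.
  rewrite IH, Hfg; auto with arith.
Qed.

Lemma dual_sum_recl (n : nat) (f : nat -> dual) :
  dual_sum (S n) f = dual_add (f O) (dual_sum n (fun k => f (S k))).
Proof. induction n as [|n IH]; cbn [dual_sum] in *; [|rewrite IH]; ring. Qed.

Lemma dual_sum_add (n : nat) (f g : nat -> dual) :
  dual_sum n (fun k => dual_add (f k) (g k)) = dual_add (dual_sum n f) (dual_sum n g).
Proof. induction n as [|n IH]; cbn [dual_sum]; [|rewrite IH]; ring. Qed.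

Lemma dual_sum_mull (n : nat) (a : dual) (f : nat -> dual) :
  dual_sum n (fun k => dual_mul a (f k)) = dual_mul a (dual_sum n f).
Proof. induction n as [|n IH]; cbn [dual_sum]; [|rewrite IH]; ring. Qed.

Lemma dual_sum_pascal (n : nat) (g : nat -> dual) :
  dual_sum (S (S n)) (fun k => dual_mul (dualR (Binomial.C (S n) k)) (g k)) =
  dual_add (dual_sum (S n) (fun k => dual_mul (dualR (Binomial.C n k)) (g k)))
           (dual_sum (S n) (fun k => dual_mul (dualR (Binomial.C n k)) (g (S k)))).
Proof.
  rewrite dual_sum_recl, (dual_sum_recl n (fun k => dual_mul _ (g k))).
  cbn [dual_sum]. rewrite !C_n_0, !C_n_n. change (dualR 1) with dual1.
  replace (dual_sum n (fun k => dual_mul (dualR (Binomial.C (S n) (S k))) (g (S k))))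
    with (dual_add (dual_sum n (fun k => dual_mul (dualR (Binomial.C n (S k))) (g (S k))))
                   (dual_sum n (fun k => dual_mul (dualR (Binomial.C n k)) (g (S k))))).
  - ring.
  - rewrite <- dual_sum_add. apply dual_sum_ext. intros k Hk.
    rewrite <- pascal, dualR_add by lia. ring.
Qed.

Fixpoint dual_poch (a : dual) (k : nat) : dual :=
  match k with
  | O => dual1
  | S m => dual_mul (dual_poch a m) (dual_add a (dualR (INR m)))
  end.

Lemma dual_poch_recl (a : dual) (k : nat) :
  dual_poch a (S k) = dual_mul a (dual_poch (dual_add a dual1) k).
Proof.
  induction k as [|k IH].
  - cbn [dual_poch]. change (dualR (INR 0)) with dual0. ring.
  - change (dual_poch a (S (S k))) with
      (dual_mul (dual_poch a (S k)) (dual_add a (dualR (INR (S k))))).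
    rewrite IH. cbn [dual_poch]. rewrite S_INR, dualR_add. change (dualR 1) with dual1. ring.
Qed.

(** [beta_int p j] is the Beta value [B(p+1, j+1)]. *)
Definition beta_int (p j : nat) : R := INR (fact p) * INR (fact j) / INR (fact (p + j + 1)).

Lemma beta_int_diff (p j : nat) : beta_int p j - beta_int p (S j) = beta_int (S p) j.
Proof.
  unfold beta_int.
  replace (S p + j + 1)%nat with (S (p + j + 1)) by lia.
  replace (p + S j + 1)%nat with (S (p + j + 1)) by lia.
  rewrite !fact_simpl, !mult_INR.
  assert (0 < INR (fact (p + j + 1))) by apply lt_0_INR, lt_O_fact.
  rewrite !S_INR, !plus_INR. simpl INR.
  pose proof (pos_INR p); pose proof (pos_INR j).
  field; lra.
Qed.

Definition weighted_vandermonde (n : nat) (s c : dual) (p : nat) : dual :=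
  dual_sum (S n) (fun k => dual_mul (dualR (Binomial.C n k))
    (dual_mul (dual_mul (dual_poch s k) (dual_poch c (n - k))) (dualR (/ INR (k + p + 1))))).

Definition beta_vandermonde (n : nat) (s t : dual) (p : nat) : dual :=
  dual_sum (S n) (fun j => dual_mul (dualR (Binomial.C n j))
    (dual_mul (dualR ((-1) ^ j * beta_int p j))
       (dual_mul (dual_poch s j) (dual_poch (dual_add t (dualR (INR j))) (n - j))))).

Lemma weighted_vandermonde_S (n : nat) (s c : dual) (p : nat) :
  weighted_vandermonde (S n) s c p =
  dual_add (dual_mul c (weighted_vandermonde n s (dual_add c dual1) p))
           (dual_mul s (weighted_vandermonde n (dual_add s dual1) c (S p))).
Proof.
  unfold weighted_vandermonde. rewrite dual_sum_pascal, <- !dual_sum_mull.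
  f_equal; apply dual_sum_ext; intros k Hk.
  - replace (S n - k)%nat with (S (n - k)) by lia. rewrite dual_poch_recl. ring.
  - replace (S n - S k)%nat with (n - k)%nat by lia.
    replace (S k + p + 1)%nat with (k + S p + 1)%nat by lia.
    rewrite dual_poch_recl. ring.
Qed.

Lemma beta_vandermonde_S (n : nat) (s t : dual) (p : nat) :
  beta_vandermonde (S n) s t p =
  dual_add (dual_mul (dual_sub t s) (beta_vandermonde n s (dual_add t dual1) p))
           (dual_mul s (beta_vandermonde n (dual_add s dual1) (dual_add t dual1) (S p))).
Proof.
  unfold beta_vandermonde. rewrite dual_sum_pascal, <- !dual_sum_mull, <- !dual_sum_add.
  apply dual_sum_ext; intros k Hk.
  replace (S n - k)%nat with (S (n - k)) by lia.
  replace (S n - S k)%nat with (n - k)%nat by lia.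
  rewrite (dual_poch_recl (dual_add t (dualR (INR k)))).
  replace (dual_add t (dualR (INR (S k)))) with (dual_add (dual_add t (dualR (INR k))) dual1)
    by (rewrite S_INR, dualR_add; change (dualR 1) with dual1; ring).
  replace (dual_add (dual_add t dual1) (dualR (INR k)))
    with (dual_add (dual_add t (dualR (INR k))) dual1) by ring.
  (* Pascal's rule pairs the weights [B(p+1,k+1)] and [-B(p+1,k+2)], which add up to
     [B(p+2,k+1)]. *)
  rewrite <- beta_int_diff. cbn [dual_poch pow].
  rewrite !dualR_mul, dualR_sub, dualR_m1.
  assert (Hpoch : dual_mul s (dual_poch (dual_add s dual1) k)
                  = dual_mul (dual_poch s k) (dual_add s (dualR (INR k))))
    by (rewrite <- dual_poch_recl; reflexivity).
  ring [Hpoch].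
Qed.

Lemma weighted_vandermonde_beta (n : nat) :
  forall (s c : dual) (p : nat),
  weighted_vandermonde n s c p = beta_vandermonde n s (dual_add s c) p.
Proof.
  induction n as [|n IH]; intros s c p.
  - unfold weighted_vandermonde, beta_vandermonde, beta_int. cbn [dual_sum Nat.sub dual_poch pow].
    rewrite C_n_0, Nat.add_0_r. replace (0 + p + 1)%nat with (S p) by lia.
    replace (p + 1)%nat with (S p) by lia.
    replace (1 * (INR (fact p) * INR (fact 0) / INR (fact (S p)))) with (/ INR (S p)).
    + ring.
    + assert (0 < INR (fact p)) by apply lt_0_INR, lt_O_fact.
      assert (0 < INR (S p)) by apply lt_0_INR, Nat.lt_0_succ.
      change (fact 0) with 1%nat. rewrite fact_simpl, mult_INR, INR_1. field; lra.
  - rewrite weighted_vandermonde_S, beta_vandermonde_S, !IH.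
    replace (dual_sub (dual_add s c) s) with c by ring.
    replace (dual_add s (dual_add c dual1)) with (dual_add (dual_add s c) dual1) by ring.
    replace (dual_add (dual_add s dual1) c) with (dual_add (dual_add s c) dual1) by ring.
    reflexivity.
Qed.

Definition is_lim_Cseq (u : nat -> C) (L : C) : Prop :=
  is_lim_seq (fun m => Re (u m)) (Re L) /\ is_lim_seq (fun m => Im (u m)) (Im L).

Lemma Clim_correct (u : nat -> C) (L : C) : is_lim_Cseq u L -> Clim u = L.
Proof.
  intros [Hre Him]. unfold Clim.
  rewrite (is_lim_seq_unique _ _ Hre), (is_lim_seq_unique _ _ Him).
  destruct L; reflexivity.
Qed.

Lemma is_lim_Cseq_mult (u v : nat -> C) (L1 L2 : C) :
  is_lim_Cseq u L1 -> is_lim_Cseq v L2 -> is_lim_Cseq (fun m => u m * v m)%C (L1 * L2)%C.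
Proof.
  intros [H1 H2] [H3 H4]. split; simpl.
  - apply is_lim_seq_minus'; apply is_lim_seq_mult'; assumption.
  - apply is_lim_seq_plus'; apply is_lim_seq_mult'; assumption.
Qed.

Lemma is_lim_Cseq_ext_loc (u v : nat -> C) (L : C) (N : nat) :
  (forall m, (N <= m)%nat -> u m = v m) -> is_lim_Cseq u L -> is_lim_Cseq v L.
Proof.
  intros Huv [Hre Him].
  split; eapply is_lim_seq_ext_loc; try eassumption;
    exists N; intros m Hm; rewrite Huv; auto.
Qed.

Lemma im_le_Cmod (c : C) : Rabs (Im c) <= Cmod c.
Proof.
  destruct c as [a b]. unfold Cmod; simpl.
  rewrite <- sqrt_Rsqr_abs. apply sqrt_le_1_alt. unfold Rsqr. nra.
Qed.

Lemma Cmod_le_Re_Im (c : C) : Cmod c <= Rabs (Re c) + Rabs (Im c).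
Proof.
  destruct c as [a b]. unfold Cmod; simpl.
  pose proof (Rabs_pos a); pose proof (Rabs_pos b).
  apply Rsqr_incr_0_var; [|lra].
  rewrite Rsqr_sqrt by nra. unfold Rsqr.
  assert (Rabs a * Rabs a = a * a) by (rewrite <- Rabs_mult; apply Rabs_right; nra).
  assert (Rabs b * Rabs b = b * b) by (rewrite <- Rabs_mult; apply Rabs_right; nra).
  nra.
Qed.

Lemma is_lim_seq_inv_INR : is_lim_seq (fun m => / INR m) 0.
Proof.
  replace (Finite 0) with (Rbar_inv p_infty) by reflexivity.
  apply is_lim_seq_inv; [apply is_lim_seq_INR | discriminate].
Qed.

Lemma is_lim_Cseq_bound (u : nat -> C) (L : C) (K : R) (N : nat) :
  (forall m, (N <= m)%nat -> Cmod (u m - L) <= K / INR m) -> is_lim_Cseq u L.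
Proof.
  intros Hu.
  assert (Hpos : is_lim_seq (fun m => K / INR m) 0).
  { replace (Finite 0) with (Rbar_mult K 0) by (simpl; f_equal; ring).
    apply is_lim_seq_scal_l, is_lim_seq_inv_INR. }
  assert (Hneg : is_lim_seq (fun m => - (K / INR m)) 0).
  { replace (Finite 0) with (Rbar_opp 0) by (simpl; f_equal; ring).
    apply (is_lim_seq_opp (fun m => K / INR m) 0), Hpos. }
  assert (Hpart : forall f : C -> R, (forall c, Rabs (f c) <= Cmod c) ->
            (forall a b, f (a - b)%C = f a - f b) ->
            is_lim_seq (fun m => f (u m)) (f L)).
  { intros f Hf Hlin.
    apply is_lim_seq_ext with (fun m => f (u m - L)%C + f L).
    { intro m. rewrite Hlin. ring. }
    replace (Finite (f L)) with (Rbar_plus 0 (f L)) by (simpl; f_equal; ring).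
    apply is_lim_seq_plus'; [|apply is_lim_seq_const].
    apply is_lim_seq_le_le_loc with (fun m => - (K / INR m)) (fun m => K / INR m); auto.
    exists N. intros m Hm. apply Rabs_le_between. eapply Rle_trans; [apply Hf | auto]. }
  split; apply Hpart.
  - apply re_le_Cmod.
  - intros [] []; simpl; ring.
  - apply im_le_Cmod.
  - intros [] []; simpl; ring.
Qed.

Lemma is_lim_seq_of_summable_steps (x d : nat -> R) :
  (forall m, Rabs (x (S m) - x m) <= d m) -> ex_series d -> exists L : R, is_lim_seq x L.
Proof.
  intros Hd Hsum.
  destruct (ex_series_le (K := R_AbsRing) (V := R_CompleteNormedModule)
              (fun m => x (S m) - x m) d Hd Hsum) as [l HS].
  exists (x O + l).
  apply is_lim_seq_incr_1.
  apply is_lim_seq_ext with (fun m => x O + sum_n (fun k => x (S k) - x k) m).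
  { intro m. induction m as [|m IH].
    - rewrite sum_O. ring.
    - rewrite sum_Sn, Rplus_comm. unfold plus; simpl. lra. }
  apply is_lim_seq_plus'; [apply is_lim_seq_const | exact HS].
Qed.

Lemma Cmod_prod_le (v rho : nat -> C) (e : nat -> R) (l : R) :
  (forall m, v (S m) = (v m * rho m)%C) ->
  (forall m, Cmod (rho m - 1) <= e m) -> (forall m, 0 <= e m) -> is_series e l ->
  forall m, Cmod (v m) <= Cmod (v O) * exp l.
Proof.
  intros Hv He He0 HS.
  assert (Hpart : forall m, sum_n e m <= l).
  { intro m. apply (is_lim_seq_incr_compare (sum_n e)); [exact HS|].
    intro k. rewrite sum_Sn. unfold plus; simpl. specialize (He0 (S k)). lra. }
  assert (Hrho : forall m, Cmod (rho m) <= exp (e m)).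
  { intro m. eapply Rle_trans; [|apply exp_ineq1_le].
    replace (rho m) with (rho m - 1 + 1)%C by ring.
    eapply Rle_trans; [apply Cmod_triangle|].
    rewrite Cmod_1. specialize (He m). lra. }
  assert (Hstep : forall m, Cmod (v (S m)) <= Cmod (v O) * exp (sum_n e m)).
  { induction m as [|m IH].
    - rewrite Hv, Cmod_mult, sum_O.
      apply Rmult_le_compat_l; [apply Cmod_ge_0 | apply Hrho].
    - rewrite Hv, Cmod_mult, sum_Sn. unfold plus; simpl.
      rewrite exp_plus, <- Rmult_assoc.
      apply Rmult_le_compat; auto using Cmod_ge_0. }
  pose proof (Cmod_ge_0 (v O)).
  intros [|m].
  - rewrite <- (Rmult_1_r (Cmod (v O))) at 1.
    apply Rmult_le_compat_l; auto.
    assert (0 <= l) by (specialize (Hpart O); rewrite sum_O in Hpart; specialize (He0 O); lra).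
    pose proof (exp_ineq1_le l). lra.
  - eapply Rle_trans; [apply Hstep|].
    apply Rmult_le_compat_l; auto.
    destruct (Rle_lt_or_eq_dec _ _ (Hpart m)) as [Hlt|Heq].
    + left; apply exp_increasing, Hlt.
    + rewrite Heq; right; reflexivity.
Qed.

(* The increments [v m * (rho m - 1)] are summable because [v] stays bounded. *)
Lemma is_lim_Cseq_prod (v rho : nat -> C) (e : nat -> R) :
  (forall m, v (S m) = (v m * rho m)%C) ->
  (forall m, Cmod (rho m - 1) <= e m) -> ex_series e ->
  exists L : C, is_lim_Cseq v L.
Proof.
  intros Hv He [l HS].
  assert (He0 : forall m, 0 <= e m)
    by (intro m; eapply Rle_trans; [apply Cmod_ge_0 | apply He]).
  set (B := Cmod (v O) * exp l).
  assert (Hsteps : forall m, Cmod (v (S m) - v m) <= B * e m).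
  { intro m. rewrite Hv.
    replace (v m * rho m - v m)%C with (v m * (rho m - 1))%C by ring.
    rewrite Cmod_mult.
    apply Rmult_le_compat; auto using Cmod_ge_0.
    apply (Cmod_prod_le v rho e l); assumption. }
  assert (HB : ex_series (fun m => B * e m)).
  { exists (B * l). apply (is_series_scal_l (K := R_AbsRing) (V := R_NormedModule)), HS. }
  destruct (is_lim_seq_of_summable_steps (fun m => Re (v m)) (fun m => B * e m))
    as [L1 H1]; [|exact HB|].
  { intro m. eapply Rle_trans; [|apply Hsteps].
    replace (Re (v (S m)) - Re (v m)) with (Re (v (S m) - v m)%C)
      by (destruct (v (S m)), (v m); simpl; ring).
    apply re_le_Cmod. }
  destruct (is_lim_seq_of_summable_steps (fun m => Im (v m)) (fun m => B * e m))
    as [L2 H2]; [|exact HB|].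
  { intro m. eapply Rle_trans; [|apply Hsteps].
    replace (Im (v (S m)) - Im (v m)) with (Im (v (S m) - v m)%C)
      by (destruct (v (S m)), (v m); simpl; ring).
    apply im_le_Cmod. }
  exists (L1, L2). split; assumption.
Qed.

Lemma exp_le_inv_1_minus (a : R) : a < 1 -> exp a <= / (1 - a).
Proof.
  intro Ha. pose proof (exp_ineq1_le (- a)). pose proof (exp_pos a).
  replace (exp a) with (/ exp (- a)) by (rewrite exp_Ropp, Rinv_inv; reflexivity).
  apply Rinv_le_contravar; lra.
Qed.

Lemma exp_taylor1_le (a : R) : Rabs a <= / 2 -> Rabs (exp a - 1 - a) <= 2 * a ^ 2.
Proof.
  intro Ha. apply Rabs_le_between in Ha.
  pose proof (exp_ineq1_le a). pose proof (exp_le_inv_1_minus a ltac:(lra)).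
  rewrite Rabs_right by lra.
  assert (/ (1 - a) - 1 - a <= 2 * a ^ 2).
  { replace (/ (1 - a) - 1 - a) with (a ^ 2 * / (1 - a)) by (field; lra).
    rewrite Rmult_comm. apply Rmult_le_compat_r; [nra|].
    replace 2 with (/ / 2) by field. apply Rinv_le_contravar; lra. }
  lra.
Qed.

Lemma sin_taylor1_le (b : R) :
  Rabs b <= / 2 -> Rabs (sin b - b) <= b ^ 2 /\ Rabs (sin b) <= Rabs b.
Proof.
  assert (Hpi := PI2_1).
  assert (Hpos : forall c, 0 <= c <= / 2 -> c - c ^ 3 / 6 <= sin c <= c).
  { intros c Hc. destruct (sin_bound c 0 ltac:(lra) ltac:(lra)) as [Hlo Hhi].
    unfold sin_approx, sin_term in Hlo, Hhi. simpl in Hlo, Hhi.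
    ring_simplify in Hlo. ring_simplify in Hhi.
    assert (c ^ 5 <= c ^ 3).
    { replace (c ^ 5) with (c ^ 3 * (c * c)) by ring.
      rewrite <- (Rmult_1_r (c ^ 3)) at 2.
      apply Rmult_le_compat_l; [apply pow_le|]; nra. }
    assert (0 <= c ^ 3) by (apply pow_le; lra).
    split; lra. }
  intro Hb. apply Rabs_le_between in Hb.
  destruct (Rle_or_lt 0 b) as [Hb0|Hb0].
  - destruct (Hpos b ltac:(lra)).
    assert (0 <= b ^ 3 <= 6 * b ^ 2) by (pose proof (pow2_ge_0 b); simpl; split; nra).
    rewrite (Rabs_right b) by lra. split; apply Rabs_le; split; nra.
  - destruct (Hpos (- b) ltac:(lra)). rewrite sin_neg in *.
    assert (0 <= (- b) ^ 3 <= 6 * b ^ 2) by (pose proof (pow2_ge_0 b); simpl; split; nra).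
    rewrite (Rabs_left1 b) by lra. split; apply Rabs_le; split; nra.
Qed.

Lemma cos_taylor0_le (b : R) : Rabs b <= / 2 -> Rabs (cos b - 1) <= b ^ 2 / 2.
Proof.
  assert (Hpi := PI2_1). intro Hb. apply Rabs_le_between in Hb.
  destruct (cos_bound b 0 ltac:(unfold Rdiv in *; lra) ltac:(unfold Rdiv in *; lra))
    as [Hlo Hhi].
  unfold cos_approx, cos_term in Hlo, Hhi. simpl in Hlo, Hhi.
  ring_simplify in Hlo. ring_simplify in Hhi.
  assert (0 <= b ^ 4 <= b ^ 2).
  { replace (b ^ 4) with (b ^ 2 * (b * b)) by ring.
    pose proof (pow2_ge_0 b). split; [apply Rmult_le_pos; nra|].
    rewrite <- (Rmult_1_r (b ^ 2)) at 2. apply Rmult_le_compat_l; nra. }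
  rewrite Rabs_left1 by lra. lra.
Qed.

Definition cexp (w : C) : C := (exp (Re w) * cos (Im w), exp (Re w) * sin (Im w)).

Lemma cexp_add (u v : C) : cexp (u + v) = (cexp u * cexp v)%C.
Proof.
  destruct u as [a b], v as [c d]. unfold cexp; simpl.
  rewrite exp_plus, cos_plus, sin_plus. apply injective_projections; simpl; ring.
Qed.

Lemma cexp_taylor1_le (w : C) : Cmod w <= / 2 -> Cmod (cexp w - 1 - w) <= 6 * Cmod w ^ 2.
Proof.
  intro Hw. destruct w as [a b].
  pose proof (re_le_Cmod (a, b)) as Ha. pose proof (im_le_Cmod (a, b)) as Hb.
  simpl in Ha, Hb. set (c := Cmod (a, b)) in *.
  assert (Ha2 : Rabs a <= / 2) by lra. assert (Hb2 : Rabs b <= / 2) by lra.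
  pose proof (exp_taylor1_le a Ha2) as Eexp.
  destruct (sin_taylor1_le b Hb2) as [Esin Esin'].
  pose proof (cos_taylor0_le b Hb2) as Ecos.
  pose proof (Rabs_pos a); pose proof (Rabs_pos b); pose proof (exp_pos a).
  assert (Hea : exp a <= 2).
  { apply Rabs_le_between in Ha2.
    eapply Rle_trans; [apply exp_le_inv_1_minus; lra|].
    replace 2 with (/ / 2) by field. apply Rinv_le_contravar; lra. }
  assert (Hsq : a ^ 2 <= c ^ 2 /\ b ^ 2 <= c ^ 2 /\ Rabs a * Rabs b <= c ^ 2).
  { rewrite <- (pow2_abs a), <- (pow2_abs b).
    repeat split; [apply pow_incr..|simpl; apply Rmult_le_compat]; lra. }
  eapply Rle_trans; [apply Cmod_le_Re_Im|]. unfold cexp; simpl.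
  replace (exp a * cos b + - (1) + - a) with ((exp a - 1 - a) + exp a * (cos b - 1)) by ring.
  replace (exp a * sin b + - 0 + - b) with ((exp a - 1) * sin b + (sin b - b)) by ring.
  assert (Hre : Rabs ((exp a - 1 - a) + exp a * (cos b - 1)) <= 2 * a ^ 2 + b ^ 2).
  { eapply Rle_trans; [apply Rabs_triang|].
    rewrite Rabs_mult, (Rabs_right (exp a)) by lra.
    assert (exp a * Rabs (cos b - 1) <= 2 * (b ^ 2 / 2))
      by (apply Rmult_le_compat; auto using Rabs_pos; lra).
    lra. }
  assert (Him : Rabs ((exp a - 1) * sin b + (sin b - b)) <= 2 * Rabs a * Rabs b + b ^ 2).
  { eapply Rle_trans; [apply Rabs_triang|]. rewrite Rabs_mult.
    assert (Rabs (exp a - 1) <= 2 * Rabs a).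
    { replace (exp a - 1) with ((exp a - 1 - a) + a) by ring.
      eapply Rle_trans; [apply Rabs_triang|].
      assert (a ^ 2 <= / 2 * Rabs a) by (rewrite <- pow2_abs; simpl; nra).
      lra. }
    assert (Rabs (exp a - 1) * Rabs (sin b) <= 2 * Rabs a * Rabs b)
      by (apply Rmult_le_compat; auto using Rabs_pos).
    lra. }
  lra.
Qed.

Lemma ln_succ_sub_bounds (x : R) : 1 <= x ->
  0 <= ln (x + 1) - ln x <= / x /\ 1 <= (x + 1) * (ln (x + 1) - ln x) <= 1 + / x.
Proof.
  intros Hx.
  assert (Hup : ln (x + 1) - ln x <= / x).
  { rewrite <- ln_div, <- (ln_exp (/ x)) by lra.
    apply ln_le; [apply Rdiv_lt_0_compat; lra|].
    replace ((x + 1) / x) with (1 + / x) by (field; lra). apply exp_ineq1_le. }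
  assert (Hlo : / (x + 1) <= ln (x + 1) - ln x).
  { assert (H : ln (x / (x + 1)) <= - / (x + 1)).
    { rewrite <- (ln_exp (- / (x + 1))).
      apply ln_le; [apply Rdiv_lt_0_compat; lra|].
      replace (x / (x + 1)) with (1 + - / (x + 1)) by (field; lra). apply exp_ineq1_le. }
    rewrite ln_div in H by lra. lra. }
  assert (0 < / (x + 1)) by (apply Rinv_0_lt_compat; lra).
  split; [lra|split].
  - apply Rle_trans with ((x + 1) * / (x + 1)); [right; field; lra|].
    apply Rmult_le_compat_l; lra.
  - apply Rle_trans with ((x + 1) * / x); [apply Rmult_le_compat_l; lra|].
    right; field; lra.
Qed.

(** * Gauss's limit and the functional equation of [CGamma] *)

Definition off_poles (z : C) : Prop := forall j : nat, (z + INR j)%C <> 0.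

Definition gauss_seq (z : C) (m : nat) : C :=
  (INR (fact m) * cpow_nat m z / rising_prod z m)%C.

Lemma Cmod_add_real_ge (z : C) (x : R) : 2 * Cmod z <= x -> x / 2 <= Cmod (z + x).
Proof.
  intros Hx. pose proof (Cmod_ge_0 z).
  assert (Htri : Cmod x <= Cmod (z + x) + Cmod z).
  { set (w := (z + x)%C). replace (RtoC x) with (w + - z)%C by (unfold w; ring).
    eapply Rle_trans; [apply Cmod_triangle|]. rewrite Cmod_opp. lra. }
  rewrite Cmod_R, Rabs_right in Htri by lra. lra.
Qed.

Lemma cpow_nat_cexp (m : nat) (z : C) : cpow_nat m z = cexp (z * ln (INR m)).
Proof.
  unfold cpow_nat, cexp. destruct z as [a b]. simpl.
  apply injective_projections; simpl; f_equal; f_equal; ring.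
Qed.

Lemma cpow_nat_S (m : nat) (z : C) :
  cpow_nat (S m) z = (cpow_nat m z * cexp (z * RtoC (ln (INR (S m)) - ln (INR m))))%C.
Proof.
  rewrite !cpow_nat_cexp, <- cexp_add. f_equal.
  destruct z as [a b]. apply injective_projections; simpl; ring.
Qed.

Lemma cpow_nat_add1 (m : nat) (z : C) : (1 <= m)%nat ->
  cpow_nat m (z + 1) = (cpow_nat m z * INR m)%C.
Proof.
  intros Hm. assert (0 < INR m) by (apply lt_0_INR; lia).
  rewrite !cpow_nat_cexp.
  replace ((z + 1) * ln (INR m))%C with (z * ln (INR m) + ln (INR m))%C by ring.
  rewrite cexp_add. f_equal. unfold cexp; simpl.
  rewrite exp_ln, cos_0, sin_0 by assumption.
  apply injective_projections; simpl; ring.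
Qed.

Lemma rising_prod_neq0 (z : C) (m : nat) : off_poles z -> rising_prod z m <> 0.
Proof.
  intros Hz. induction m as [|m IH]; cbn [rising_prod].
  - specialize (Hz O). rewrite Cplus_0_r in Hz. exact Hz.
  - apply Cmult_neq_0; auto.
Qed.

Lemma rising_prod_recl (z : C) (m : nat) :
  rising_prod z (S m) = (z * rising_prod (z + 1) m)%C.
Proof.
  induction m as [|m IH].
  - cbn [rising_prod INR]. apply injective_projections; simpl; ring.
  - change (rising_prod z (S (S m)))
      with (rising_prod z (S m) * (z + INR (S (S m))))%C.
    rewrite IH. cbn [rising_prod]. rewrite (S_INR (S m)), RtoC_plus. ring.
Qed.

Definition gauss_ratio (z : C) (m : nat) : C :=
  (RtoC (INR m + 1) * cexp (z * RtoC (ln (INR m + 1) - ln (INR m))) / (z + RtoC (INR m + 1)))%C.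

Lemma gauss_seq_S (z : C) (m : nat) : off_poles z -> (1 <= m)%nat ->
  gauss_seq z (S m) = (gauss_seq z m * gauss_ratio z m)%C.
Proof.
  intros Hz Hm. unfold gauss_seq, gauss_ratio.
  rewrite cpow_nat_S, fact_simpl, mult_INR.
  change (rising_prod z (S m)) with (rising_prod z m * (z + INR (S m)))%C.
  pose proof (rising_prod_neq0 z m Hz). pose proof (Hz (S m)).
  rewrite !S_INR in *. rewrite RtoC_mult, !RtoC_plus in *.
  field. split; assumption.
Qed.

(* [(x+1) e^w - (z + x + 1) = (x+1)(e^w - 1 - w) + z((x+1) L - 1)] with [w = z L],
   [L = ln (x+1) - ln x]: both terms are [O(1/x)] and the denominator is [~ x]. *)
Lemma gauss_ratio_bound (z : C) (x : R) : 1 <= x -> 2 * Cmod z + 2 <= x ->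
  Cmod (RtoC (x + 1) * cexp (z * RtoC (ln (x + 1) - ln x)) / (z + RtoC (x + 1)) - 1)%C
  <= 2 * (12 * Cmod z ^ 2 + Cmod z) / x ^ 2.
Proof.
  intros Hx1 Hx2.
  destruct (ln_succ_sub_bounds x Hx1) as [[L0 L1] [L2 L3]].
  set (L := ln (x + 1) - ln x) in *.
  set (w := (z * L)%C). set (E := cexp w).
  pose proof (Cmod_ge_0 z) as Hz0.
  assert (Hw : Cmod w <= Cmod z / x).
  { unfold w. rewrite Cmod_mult, Cmod_R, Rabs_right by lra.
    unfold Rdiv. apply Rmult_le_compat_l; lra. }
  assert (Hw2 : Cmod w <= / 2).
  { eapply Rle_trans; [apply Hw|]. apply Rmult_le_reg_r with x; [lra|].
    unfold Rdiv. rewrite Rmult_assoc, Rinv_l by lra. lra. }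
  pose proof (cexp_taylor1_le w Hw2) as HE. fold E in HE.
  pose proof (Cmod_add_real_ge z (x + 1) ltac:(lra)) as HD.
  set (Dn := (z + RtoC (x + 1))%C) in *.
  assert (HDnz : Dn <> 0) by (intro E0; rewrite E0, Cmod_0 in HD; lra).
  set (N := (RtoC (x + 1) * (E - 1 - w) + z * RtoC ((x + 1) * L - 1))%C).
  replace (RtoC (x + 1) * E / Dn - 1)%C with (N / Dn)%C.
  2:{ unfold N, w, Dn in *. rewrite RtoC_minus, RtoC_mult. field. exact HDnz. }
  rewrite Cmod_div by exact HDnz.
  assert (HNb : Cmod N <= (12 * Cmod z ^ 2 + Cmod z) / x).
  { unfold N. eapply Rle_trans; [apply Cmod_triangle|].
    rewrite !Cmod_mult, !Cmod_R, (Rabs_right (x + 1)), (Rabs_right ((x + 1) * L - 1)) by lra.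
    assert (A1 : (x + 1) * Cmod (E - 1 - w) <= 12 * Cmod z ^ 2 / x).
    { assert (Cmod w ^ 2 <= (Cmod z / x) ^ 2) by (apply pow_incr; split; auto using Cmod_ge_0).
      assert (0 <= (Cmod z / x) ^ 2) by apply pow2_ge_0.
      apply Rle_trans with ((x + 1) * (6 * (Cmod z / x) ^ 2)).
      - apply Rmult_le_compat_l; lra.
      - replace (12 * Cmod z ^ 2 / x) with (2 * x * 6 * (Cmod z / x) ^ 2) by (field; lra).
        nra. }
    assert (A2 : Cmod z * ((x + 1) * L - 1) <= Cmod z / x)
      by (unfold Rdiv; apply Rmult_le_compat_l; lra).
    unfold Rdiv in *. lra. }
  apply Rle_trans with (((12 * Cmod z ^ 2 + Cmod z) / x) / (x / 2)).
  - unfold Rdiv at 1 3. apply Rmult_le_compat; auto using Cmod_ge_0.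
    + left; apply Rinv_0_lt_compat; lra.
    + apply Rinv_le_contravar; lra.
  - right. field. lra.
Qed.

Lemma ex_series_inv_consecutive : ex_series (fun k => / (INR (k + 1) * INR (k + 2))).
Proof.
  exists 1. change (is_lim_seq (sum_n (fun k => / (INR (k + 1) * INR (k + 2)))) 1).
  apply is_lim_seq_ext with (fun n => 1 - / INR (n + 2)).
  { intro n. induction n as [|n IH].
    - rewrite sum_O. simpl. field.
    - rewrite sum_Sn, <- IH. unfold plus; cbn -[INR].
      replace (S (n + 1)) with (n + 2)%nat by lia.
      replace (S (n + 2)) with (n + 2 + 1)%nat by lia.
      rewrite plus_INR, INR_1. assert (0 < INR (n + 2)) by (apply lt_0_INR; lia).
      field. lra. }
  replace (Finite 1) with (Rbar_minus 1 0) by (simpl; f_equal; ring).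
  apply is_lim_seq_minus'; [apply is_lim_seq_const|].
  apply (is_lim_seq_incr_n (fun n => / INR n) 2 0), is_lim_seq_inv_INR.
Qed.

Lemma ex_series_inv_sqr_shift (K : R) (M : nat) : 0 <= K -> (2 <= M)%nat ->
  ex_series (fun k => K / INR (k + M) ^ 2).
Proof.
  intros HK HM.
  apply (ex_series_le (K := R_AbsRing) (V := R_CompleteNormedModule))
    with (fun k => K * / (INR (k + 1) * INR (k + 2))).
  - intro k. change (Rabs (K / INR (k + M) ^ 2) <= K * / (INR (k + 1) * INR (k + 2))).
    assert (0 < INR (k + 1)) by (apply lt_0_INR; lia).
    assert (INR (k + 1) <= INR (k + 2) <= INR (k + M)) by (split; apply le_INR; lia).
    assert (INR (k + 1) * INR (k + 2) <= INR (k + M) ^ 2) by (simpl; nra).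
    rewrite Rabs_right.
    + unfold Rdiv. apply Rmult_le_compat_l; [exact HK|]. apply Rinv_le_contravar; nra.
    + apply Rle_ge, Rdiv_le_0_compat; [exact HK|]. simpl; nra.
  - destruct ex_series_inv_consecutive as [l Hl]. exists (K * l).
    apply (is_series_scal_l (K := R_AbsRing) (V := R_NormedModule)), Hl.
Qed.

Lemma ex_lim_gauss_seq (z : C) : off_poles z -> exists L, is_lim_Cseq (gauss_seq z) L.
Proof.
  intros Hz.
  destruct (INR_archimed 1 (2 * Cmod z + 2)) as [M HM]; [lra|]. rewrite Rmult_1_r in HM.
  pose proof (Cmod_ge_0 z).
  assert (HM3 : (3 <= M)%nat).
  { destruct (le_lt_dec 3 M) as [|Hlt]; auto.
    assert (INR M <= 2) by (replace 2 with (INR 2) by (simpl; ring); apply le_INR; lia).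
    lra. }
  set (K := 2 * (12 * Cmod z ^ 2 + Cmod z)).
  assert (HK : 0 <= K) by (unfold K; pose proof (pow2_ge_0 (Cmod z)); lra).
  destruct (is_lim_Cseq_prod (fun k => gauss_seq z (k + M)) (fun k => gauss_ratio z (k + M))
              (fun k => K / INR (k + M) ^ 2)) as [L [H1 H2]].
  - intro m. apply gauss_seq_S; [assumption | lia].
  - intro m. assert (INR M <= INR (m + M)) by (apply le_INR; lia).
    assert (1 <= INR M) by (replace 1 with (INR 1) by reflexivity; apply le_INR; lia).
    apply gauss_ratio_bound; lra.
  - apply ex_series_inv_sqr_shift; [exact HK | lia].
  - exists L. split.
    + apply (is_lim_seq_incr_n (fun m => Re (gauss_seq z m)) M), H1.
    + apply (is_lim_seq_incr_n (fun m => Im (gauss_seq z m)) M), H2.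
Qed.

Lemma gauss_seq_add1 (z : C) (m : nat) : off_poles z -> (1 <= m)%nat ->
  gauss_seq (z + 1) m = (gauss_seq z m * (z * INR m / (z + (INR m + 1))))%C.
Proof.
  intros Hz Hm. unfold gauss_seq. rewrite cpow_nat_add1 by assumption.
  pose proof (rising_prod_recl z m) as HR. cbn [rising_prod] in HR.
  pose proof (rising_prod_neq0 z m Hz). pose proof (Hz (S m)) as HSm. pose proof (Hz O) as H0.
  rewrite S_INR, RtoC_plus in HSm, HR. cbn [INR] in H0. rewrite Cplus_0_r in H0.
  assert (HR' : rising_prod (z + 1) m = (rising_prod z m * (z + (INR m + 1)) / z)%C)
    by (rewrite HR; field; exact H0).
  rewrite HR'. field. repeat split; assumption.
Qed.

Lemma gauss_factor_bound (z : C) (m : nat) : 2 * Cmod z + 2 <= INR m ->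
  Cmod (z * INR m / (z + (INR m + 1)) - z)%C <= 2 * Cmod z * Cmod (z + 1) / INR m.
Proof.
  intros Hm. pose proof (Cmod_ge_0 z). pose proof (Cmod_ge_0 (z + 1)).
  set (x := INR m) in *.
  pose proof (Cmod_add_real_ge z (x + 1) ltac:(lra)) as HD. rewrite RtoC_plus in HD.
  assert (HDnz : (z + (x + 1))%C <> 0) by (intro E0; rewrite E0, Cmod_0 in HD; lra).
  replace (z * x / (z + (x + 1)) - z)%C with (- (z * (z + 1) / (z + (x + 1))))%C
    by (field; exact HDnz).
  rewrite Cmod_opp, Cmod_div, Cmod_mult by exact HDnz.
  replace (2 * Cmod z * Cmod (z + 1) / x) with (Cmod z * Cmod (z + 1) / (x / 2)) by (field; lra).
  unfold Rdiv. apply Rmult_le_compat_l; [apply Rmult_le_pos; assumption|].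
  apply Rinv_le_contravar; lra.
Qed.

Lemma CGamma_add1 (z : C) : off_poles z -> CGamma (z + 1) = (z * CGamma z)%C.
Proof.
  intros Hz. destruct (ex_lim_gauss_seq z Hz) as [L HL].
  change (Clim (gauss_seq (z + 1)) = (z * Clim (gauss_seq z))%C).
  rewrite (Clim_correct _ _ HL). apply Clim_correct.
  destruct (INR_archimed 1 (2 * Cmod z + 2)) as [N HN]; [lra|]. rewrite Rmult_1_r in HN.
  pose proof (Cmod_ge_0 z).
  assert (HN1 : (1 <= N)%nat) by (destruct N; [simpl in HN; lra | lia]).
  replace (z * L)%C with (L * z)%C by ring.
  apply is_lim_Cseq_ext_loc
    with (fun m => gauss_seq z m * (z * INR m / (z + (INR m + 1))))%C N.
  { intros m Hm. rewrite gauss_seq_add1 by (auto; lia). reflexivity. }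
  apply is_lim_Cseq_mult; [exact HL|].
  apply is_lim_Cseq_bound with (2 * Cmod z * Cmod (z + 1)) N.
  intros m Hm. apply gauss_factor_bound.
  assert (INR N <= INR m) by (apply le_INR; lia). lra.
Qed.

(** * The shift rule for [CH] *)

Lemma not_neg_int_add_S (z : C) (j : nat) : ~ is_neg_int z -> (z + INR (S j))%C <> 0.
Proof.
  intros Hz E. apply Hz. exists j.
  replace z with (z + INR (S j) - INR (S j))%C by ring.
  rewrite E, RtoC_opp. ring.
Qed.

Lemma INR_add_pos_neq0 (k : nat) (x : R) : 0 < x -> (INR k + x)%C <> 0.
Proof.
  intros Hx E. rewrite <- RtoC_plus in E. apply RtoC_inj in E.
  pose proof (pos_INR k). lra.
Qed.

Lemma RtoC_INR_S_neq0 (j : nat) : RtoC (INR (S j)) <> 0.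
Proof. intro E. apply RtoC_inj in E. pose proof (lt_0_INR (S j) (Nat.lt_0_succ j)). lra. Qed.

Definition harmonic_term (z : C) (j : nat) : C := (z / (INR (S j) * (INR (S j) + z)))%C.

Lemma CH_harmonic_term (z : C) :
  CH z = (Series (fun j => Re (harmonic_term z j)), Series (fun j => Im (harmonic_term z j))).
Proof. reflexivity. Qed.

Lemma harmonic_term_bound (z : C) (j : nat) : 2 * Cmod z <= INR (S j) ->
  Cmod (harmonic_term z j) <= 2 * Cmod z / INR (S j) ^ 2.
Proof.
  intros Hj. pose proof (Cmod_add_real_ge z _ Hj) as HD.
  pose proof (lt_0_INR (S j) (Nat.lt_0_succ j)).
  assert (Hnz : (INR (S j) + z)%C <> 0)
    by (rewrite Cplus_comm; intro E; rewrite E, Cmod_0 in HD; lra).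
  unfold harmonic_term.
  rewrite Cmod_div, Cmod_mult, Cmod_R, Rabs_right, Cplus_comm
    by (lra || apply Cmult_neq_0; auto using RtoC_INR_S_neq0).
  replace (2 * Cmod z / INR (S j) ^ 2)
    with (Cmod z / (INR (S j) * (INR (S j) / 2))) by (field; lra).
  unfold Rdiv. apply Rmult_le_compat_l; [apply Cmod_ge_0|].
  apply Rinv_le_contravar; [nra|]. apply Rmult_le_compat_l; lra.
Qed.

Lemma ex_series_harmonic_term (z : C) (f : C -> R) :
  (forall c, Rabs (f c) <= Cmod c) -> ex_series (fun j => f (harmonic_term z j)).
Proof.
  intros Hf. pose proof (Cmod_ge_0 z).
  destruct (INR_archimed 1 (2 * Cmod z)) as [N HN]; [lra|]. rewrite Rmult_1_r in HN.
  apply (ex_series_incr_n (K := R_AbsRing) (V := R_NormedModule) _ (S N)).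
  apply (ex_series_le (K := R_AbsRing) (V := R_CompleteNormedModule))
    with (fun k => 2 * Cmod z / INR (k + S (S N)) ^ 2).
  - intro k.
    change (Rabs (f (harmonic_term z (S N + k))) <= 2 * Cmod z / INR (k + S (S N)) ^ 2).
    replace (k + S (S N))%nat with (S (S N + k)) by lia.
    eapply Rle_trans; [apply Hf|]. apply harmonic_term_bound.
    assert (INR N <= INR (S (S N + k))) by (apply le_INR; lia). lra.
  - apply ex_series_inv_sqr_shift; [lra | lia].
Qed.

Lemma harmonic_term_add1 (z : C) (j : nat) : ~ is_neg_int z ->
  (harmonic_term (z + 1) j - harmonic_term z j)%C
  = (/ (z + INR (S j)) - / (z + INR (S (S j))))%C.
Proof.
  intros Hz. unfold harmonic_term.
  pose proof (not_neg_int_add_S z j Hz). pose proof (not_neg_int_add_S z (S j) Hz).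
  pose proof (RtoC_INR_S_neq0 j).
  rewrite (S_INR (S j)), RtoC_plus in *.
  field. repeat split; try assumption; rewrite Cplus_comm; assumption.
Qed.

Lemma is_lim_Cseq_inv_add_INR (z : C) : is_lim_Cseq (fun m => / (z + INR (S m)))%C 0.
Proof.
  destruct (INR_archimed 1 (2 * Cmod z)) as [N HN]; [lra|]. rewrite Rmult_1_r in HN.
  apply is_lim_Cseq_bound with 2 (S N). intros m Hm.
  assert (INR N <= INR m <= INR (S m)) by (split; apply le_INR; lia).
  assert (0 < INR m) by (apply lt_0_INR; lia).
  pose proof (Cmod_add_real_ge z (INR (S m)) ltac:(lra)) as HD.
  assert (Hnz : (z + INR (S m))%C <> 0) by (intro E; rewrite E, Cmod_0 in HD; lra).
  unfold Cminus. rewrite Copp_0, Cplus_0_r, Cmod_inv by exact Hnz.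
  replace (2 / INR m) with (/ (INR m / 2)) by (field; lra).
  apply Rinv_le_contravar; lra.
Qed.

Lemma is_series_telescope (u : nat -> R) :
  is_lim_seq u 0 -> is_series (fun j => u j - u (S j)) (u O).
Proof.
  intros Hu. change (is_lim_seq (sum_n (fun j => u j - u (S j))) (u O)).
  apply is_lim_seq_ext with (fun n => u O - u (S n)).
  { intro n. induction n as [|n IH].
    - rewrite sum_O. reflexivity.
    - rewrite sum_Sn, <- IH. unfold plus; simpl. ring. }
  replace (Finite (u O)) with (Rbar_minus (u O) 0) by (simpl; f_equal; ring).
  apply is_lim_seq_minus'; [apply is_lim_seq_const|].
  apply (is_lim_seq_incr_1 u 0), Hu.
Qed.

Lemma CH_add1 (z : C) : ~ is_neg_int z -> CH (z + 1) = (CH z + / (z + 1))%C.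
Proof.
  intros Hz.
  destruct (is_lim_Cseq_inv_add_INR z) as [Hre Him].
  set (u := fun m => (/ (z + INR (S m)))%C) in *.
  assert (Hu0 : u O = (/ (z + 1))%C) by (unfold u; rewrite INR_1; reflexivity).
  assert (Hpart : forall f : C -> R, (forall c, Rabs (f c) <= Cmod c) ->
            (forall a b, f (a - b)%C = f a - f b) -> is_lim_seq (fun m => f (u m)) (f 0) ->
            Series (fun j => f (harmonic_term (z + 1) j))
            = Series (fun j => f (harmonic_term z j)) + f (u O)).
  { intros f Hf Hlin Hlim.
    assert (H0 : f 0 = 0).
    { pose proof (Hlin 0 0) as E. replace (0 - 0)%C with (RtoC 0) in E by ring. lra. }
    rewrite H0 in Hlim.
    pose proof (Series_minus _ _ (ex_series_harmonic_term (z + 1) f Hf)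
                  (ex_series_harmonic_term z f Hf)) as Hdiff.
    rewrite (Series_ext _ (fun j => f (u j) - f (u (S j)))) in Hdiff.
    2:{ intro j. rewrite <- !Hlin, harmonic_term_add1 by assumption. reflexivity. }
    rewrite (is_series_unique _ _ (is_series_telescope (fun m => f (u m)) Hlim)) in Hdiff.
    lra. }
  assert (Hre_lin : forall a b, Re (a - b)%C = Re a - Re b) by (intros [] []; simpl; ring).
  assert (Him_lin : forall a b, Im (a - b)%C = Im a - Im b) by (intros [] []; simpl; ring).
  rewrite !CH_harmonic_term, (Hpart Re), (Hpart Im), Hu0
    by (assumption || apply re_le_Cmod || apply im_le_Cmod).
  reflexivity.
Qed.

Fixpoint cpoch (a : C) (k : nat) : C :=
  match k with O => RtoC 1 | S m => (cpoch a m * (a + INR m))%C end.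

Fixpoint recip_sum (a : C) (k : nat) : C :=
  match k with O => RtoC 0 | S m => (recip_sum a m + / (a + INR m))%C end.

Lemma cpoch_recl (a : C) (k : nat) : cpoch a (S k) = (a * cpoch (a + 1) k)%C.
Proof.
  induction k as [|k IH]; [simpl; ring|].
  change (cpoch a (S (S k))) with (cpoch a (S k) * (a + INR (S k)))%C.
  rewrite IH. cbn [cpoch]. rewrite S_INR, RtoC_plus. ring.
Qed.

Lemma recip_sum_recl (a : C) (k : nat) : recip_sum a (S k) = (/ a + recip_sum (a + 1) k)%C.
Proof.
  induction k as [|k IH]; [cbn [recip_sum INR]; rewrite !Cplus_0_r, Cplus_0_l; reflexivity|].
  change (recip_sum a (S (S k))) with (recip_sum a (S k) + / (a + INR (S k)))%C.
  rewrite IH. cbn [recip_sum].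
  replace (a + 1 + INR k)%C with (a + INR (S k))%C by (rewrite S_INR, RtoC_plus; ring).
  ring.
Qed.

Lemma cpoch_add1 (a : C) (k : nat) : a <> 0 ->
  cpoch (a + 1) k = (cpoch a k * (a + INR k) / a)%C.
Proof.
  intros Ha. transitivity (a * cpoch (a + 1) k / a)%C; [field; exact Ha|].
  rewrite <- cpoch_recl. reflexivity.
Qed.

Lemma recip_sum_add1 (a : C) (k : nat) :
  recip_sum (a + 1) k = (recip_sum a k + / (a + INR k) - / a)%C.
Proof.
  pose proof (recip_sum_recl a k) as E. cbn [recip_sum] in E.
  rewrite E. ring.
Qed.

Lemma cpoch_add (a : C) (k l : nat) : cpoch a (k + l) = (cpoch a k * cpoch (a + INR k) l)%C.
Proof.
  induction l as [|l IH].
  - rewrite Nat.add_0_r. simpl. ring.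
  - rewrite Nat.add_succ_r. cbn [cpoch]. rewrite IH, plus_INR, RtoC_plus. ring.
Qed.

Lemma off_poles_add_nat (z : C) (k : nat) : off_poles z -> off_poles (z + INR k).
Proof.
  intros Hz j. rewrite <- Cplus_assoc, <- RtoC_plus, <- plus_INR. apply Hz.
Qed.

Lemma cpoch_neq0 (a : C) (k : nat) : off_poles a -> cpoch a k <> 0.
Proof.
  intros Ha. induction k as [|k IH]; cbn [cpoch].
  - exact C1_nz.
  - apply Cmult_neq_0; auto.
Qed.

Lemma CGamma_add_nat (z : C) (k : nat) : off_poles z ->
  CGamma (z + INR k) = (CGamma z * cpoch z k)%C.
Proof.
  intros Hz. induction k as [|k IH].
  - cbn [INR cpoch]. rewrite Cplus_0_r. ring.
  - rewrite S_INR, RtoC_plus, Cplus_assoc, CGamma_add1 by (apply off_poles_add_nat, Hz).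
    rewrite IH. cbn [cpoch]. ring.
Qed.

Lemma CH_add_nat (z : C) (k : nat) : ~ is_neg_int z ->
  CH (z + INR k) = (CH z + recip_sum (z + 1) k)%C.
Proof.
  intros Hz. induction k as [|k IH].
  - cbn [INR recip_sum]. rewrite !Cplus_0_r. reflexivity.
  - rewrite S_INR, RtoC_plus, Cplus_assoc, CH_add1, IH.
    + cbn [recip_sum]. rewrite <- !Cplus_assoc, (Cplus_comm 1 (INR k)). reflexivity.
    + intros [j Hj]. apply (not_neg_int_add_S z (k + j) Hz).
      replace (z + INR (S (k + j)))%C with (z + INR k + INR (S j))%C
        by (rewrite !S_INR, plus_INR, !RtoC_plus; ring).
      rewrite Hj, <- RtoC_plus. f_equal. ring.
Qed.

Lemma dual_poch_pair (a b : C) (k : nat) : off_poles a ->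
  dual_poch (a, b) k = (cpoch a k, b * cpoch a k * recip_sum a k)%C.
Proof.
  intros Ha. induction k as [|k IH].
  - cbn [dual_poch cpoch recip_sum]. unfold dual1. f_equal. ring.
  - cbn [dual_poch]. rewrite IH. unfold dual_mul, dual_add, dualR. cbn [fst snd cpoch recip_sum].
    specialize (Ha k). f_equal. field. exact Ha.
Qed.

Lemma dual_poch_real (a : C) (k : nat) : dual_poch (a, RtoC 0) k = (cpoch a k, RtoC 0).
Proof.
  induction k as [|k IH]; [reflexivity|].
  cbn [dual_poch]. rewrite IH. unfold dual_mul, dual_add, dualR. cbn [fst snd cpoch].
  f_equal; ring.
Qed.

Lemma Csum_ext (n : nat) (f g : nat -> C) :
  (forall k, (k <= n)%nat -> f k = g k) -> Csum n f = Csum n g.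
Proof.
  induction n as [|n IH]; intros Hfg; simpl.
  - apply Hfg. lia.
  - rewrite IH, Hfg; auto.
Qed.

Lemma Csum_0 (n : nat) : Csum n (fun _ => RtoC 0) = 0.
Proof. induction n as [|n IH]; simpl; [|rewrite IH]; ring. Qed.

Lemma Csum_minus (n : nat) (f g : nat -> C) :
  (Csum n f - Csum n g)%C = Csum n (fun k => f k - g k)%C.
Proof. induction n as [|n IH]; simpl; [|rewrite <- IH]; ring. Qed.

Lemma Csum_plus (n : nat) (f g : nat -> C) :
  Csum n (fun k => f k + g k)%C = (Csum n f + Csum n g)%C.
Proof. induction n as [|n IH]; simpl; [|rewrite IH]; ring. Qed.

Lemma Csum_mull (n : nat) (a : C) (f : nat -> C) :
  Csum n (fun k => a * f k)%C = (a * Csum n f)%C.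
Proof. induction n as [|n IH]; simpl; [|rewrite IH]; ring. Qed.

Lemma dual_sum_fst (n : nat) (f : nat -> dual) :
  fst (dual_sum (S n) f) = Csum n (fun k => fst (f k)).
Proof.
  induction n as [|n IH]; [simpl; ring|].
  change (dual_sum (S (S n)) f) with (dual_add (dual_sum (S n) f) (f (S n))).
  unfold dual_add. cbn [fst]. rewrite IH. reflexivity.
Qed.

Lemma dual_sum_snd (n : nat) (f : nat -> dual) :
  snd (dual_sum (S n) f) = Csum n (fun k => snd (f k)).
Proof.
  induction n as [|n IH]; [simpl; ring|].
  change (dual_sum (S (S n)) f) with (dual_add (dual_sum (S n) f) (f (S n))).
  unfold dual_add. cbn [snd]. rewrite IH. reflexivity.
Qed.

Lemma off_poles_of_not_neg_int (z : C) : z <> 0 -> ~ is_neg_int z -> off_poles z.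
Proof.
  intros Hz0 Hz [|j].
  - rewrite Cplus_0_r. exact Hz0.
  - apply not_neg_int_add_S, Hz.
Qed.

Lemma off_poles_succ_of_not_neg_int (z : C) : ~ is_neg_int z -> off_poles (z + 1).
Proof.
  intros Hz j. rewrite <- Cplus_assoc, <- RtoC_plus, Rplus_comm, <- S_INR.
  apply not_neg_int_add_S, Hz.
Qed.

Lemma Cdiv_0_r (x : C) : (x / 0)%C = 0.
Proof.
  unfold Cdiv. replace (/ RtoC 0)%C with (RtoC 0); [ring|].
  unfold Cinv. simpl. unfold Rdiv. rewrite !Rmult_0_l, Rplus_0_l, Rinv_0.
  apply injective_projections; simpl; ring.
Qed.

Lemma Cbinom_add_nat (x y : C) (a b : nat) :
  off_poles (x + 1) -> off_poles (y + 1) -> off_poles (x - y + 1) ->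
  Cbinom (INR (a + b) + x) (INR a + y)
  = (CGamma (x + 1) * cpoch (x + 1) (a + b)
     / (CGamma (y + 1) * cpoch (y + 1) a * (CGamma (x - y + 1) * cpoch (x - y + 1) b)))%C.
Proof.
  intros Hx Hy Hxy. unfold Cbinom. rewrite <- !CGamma_add_nat by assumption.
  f_equal; [|f_equal]; f_equal; rewrite ?plus_INR, ?RtoC_plus; ring.
Qed.

Lemma Cbinom_add_nat_eq0 (x y : C) (a b : nat) :
  off_poles (x + 1) -> off_poles (y + 1) -> off_poles (x - y + 1) ->
  CGamma (x + 1) = 0 \/ CGamma (y + 1) = 0 \/ CGamma (x - y + 1) = 0 ->
  Cbinom (INR (a + b) + x) (INR a + y) = 0.
Proof.
  intros Hx Hy Hxy Hzero. rewrite Cbinom_add_nat by assumption.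
  destruct Hzero as [E|[E|E]]; rewrite E, ?Cmult_0_l, ?Cmult_0_r, ?Cdiv_0_r; unfold Cdiv; ring.
Qed.

Lemma RtoC_inv_INR_add2 (k : nat) : RtoC (/ INR (k + 1 + 1)) = (/ (INR k + 2))%C.
Proof.
  rewrite RtoC_inv, !plus_INR, INR_1, <- RtoC_plus by (apply not_0_INR; lia).
  f_equal. f_equal. ring.
Qed.

Lemma RtoC_beta_int_1 (k : nat) : RtoC (beta_int 1 k) = (/ ((INR k + 1) * (INR k + 2)))%C.
Proof.
  assert (0 < INR (fact k)) by apply lt_0_INR, lt_O_fact.
  pose proof (pos_INR k).
  unfold beta_int. replace (1 + k + 1)%nat with (S (S k)) by lia.
  rewrite !fact_simpl, !mult_INR, !S_INR. cbn [fact INR].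
  rewrite <- !RtoC_plus, <- RtoC_mult, <- RtoC_inv by nra.
  f_equal. field. lra.
Qed.

Definition lhs_sum (n : nat) (r s : C) : C :=
  (Csum n (fun k => Binomial.C n k * (CH (INR k + s) - CH (INR n - INR k + r - s))
                     / ((INR k + 2) * (INR k + s) * Cbinom (INR n + r) (INR k + s)))
   - Csum n (fun k => Binomial.C n k
                     / ((INR k + 2) * ((INR k + s) * (INR k + s))
                        * Cbinom (INR n + r) (INR k + s))))%C.

Definition rhs_sum (n : nat) (r s : C) : C :=
  (Csum n (fun k => Binomial.C n k * RtoC ((-1) ^ k) * (CH (INR k + s) - CH (r - s))
                     / ((INR k + 1) * (INR k + 2) * (INR k + s) * Cbinom (INR k + r) (INR k + s)))
   - Csum n (fun k => Binomial.C n k * RtoC ((-1) ^ k)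
                     / ((INR k + 1) * (INR k + 2) * ((INR k + s) * (INR k + s))
                        * Cbinom (INR k + r) (INR k + s))))%C.

Lemma lhs_sum_binom_zero (n : nat) (r s : C) :
  (forall k, (k <= n)%nat -> Cbinom (INR n + r) (INR k + s) = 0) -> lhs_sum n r s = 0.
Proof.
  intros Hzero. unfold lhs_sum. rewrite Csum_minus.
  rewrite <- (Csum_0 n). apply Csum_ext. intros k Hk.
  rewrite Hzero by exact Hk. rewrite !Cmult_0_r, !Cdiv_0_r. ring.
Qed.

Lemma rhs_sum_binom_zero (n : nat) (r s : C) :
  (forall k, Cbinom (INR k + r) (INR k + s) = 0) -> rhs_sum n r s = 0.
Proof.
  intros Hzero. unfold rhs_sum. rewrite Csum_minus.
  rewrite <- (Csum_0 n). apply Csum_ext. intros k Hk.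
  rewrite Hzero, !Cmult_0_r, !Cdiv_0_r. ring.
Qed.

Section Theorem24.

Variables (n : nat) (r s : C).
Hypotheses (hr : ~ is_neg_int r) (hs : ~ is_neg_int s) (hs0 : s <> 0)
  (hrs : ~ is_neg_int (r - s)).

Let c : C := (r - s + 1)%C.

Let poles_s : off_poles s := off_poles_of_not_neg_int s hs0 hs.
Let poles_s1 : off_poles (s + 1) := off_poles_succ_of_not_neg_int s hs.
Let poles_r1 : off_poles (r + 1) := off_poles_succ_of_not_neg_int r hr.
Let poles_c : off_poles c := off_poles_succ_of_not_neg_int (r - s) hrs.

Lemma theorem24_degenerate :
  CGamma (r + 1) = 0 \/ CGamma (s + 1) = 0 \/ CGamma c = 0 -> lhs_sum n r s = rhs_sum n r s.
Proof.
  intros Hzero. rewrite lhs_sum_binom_zero, rhs_sum_binom_zero; [reflexivity| |].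
  - intro k. rewrite <- (Nat.add_0_r k) at 1. apply Cbinom_add_nat_eq0; assumption.
  - intros k Hk. replace n with (k + (n - k))%nat at 1 by lia.
    apply Cbinom_add_nat_eq0; assumption.
Qed.

Lemma CH_nat_add_s (k : nat) : CH (INR k + s) = (CH s + recip_sum (s + 1) k)%C.
Proof. rewrite Cplus_comm. apply CH_add_nat, hs. Qed.

Let sigma : dual := (s, RtoC 1).
Let gamma : dual := (c, RtoC (-1)).

Let scale : C := (CGamma (s + 1) * CGamma c / (CGamma (r + 1) * s * cpoch (r + 1) n))%C.
Let X : C := (CH s - CH (r - s) - / s)%C.

Hypotheses (hGr : CGamma (r + 1) <> 0) (hGs : CGamma (s + 1) <> 0) (hGc : CGamma c <> 0).

Lemma lhs_sum_weighted_vandermonde :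
  lhs_sum n r s = (scale * (X * fst (weighted_vandermonde n sigma gamma 1)
                            + snd (weighted_vandermonde n sigma gamma 1)))%C.
Proof.
  unfold lhs_sum, weighted_vandermonde.
  rewrite dual_sum_fst, dual_sum_snd, <- Csum_mull, <- Csum_plus, <- Csum_mull, Csum_minus.
  apply Csum_ext. intros k Hk.
  assert (Hbinom : Cbinom (INR n + r) (INR k + s)
    = (CGamma (r + 1) * cpoch (r + 1) n
       / (CGamma (s + 1) * cpoch (s + 1) k * (CGamma c * cpoch c (n - k))))%C).
  { pose proof (Cbinom_add_nat r s k (n - k) poles_r1 poles_s1 poles_c) as E.
    replace (k + (n - k))%nat with n in E by lia. exact E. }
  assert (HHc : CH (INR n - INR k + r - s) = (CH (r - s) + recip_sum c (n - k))%C).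
  { rewrite <- CH_add_nat by exact hrs. f_equal.
    rewrite minus_INR, RtoC_minus by lia. ring. }
  rewrite Hbinom, CH_nat_add_s, HHc.
  unfold sigma, gamma. rewrite !dual_poch_pair by assumption.
  unfold dual_mul, dualR. cbn [fst snd].
  rewrite RtoC_inv_INR_add2, (cpoch_add1 s k hs0), (recip_sum_add1 s k).
  pose proof (poles_s k). pose proof (cpoch_neq0 s k poles_s).
  pose proof (cpoch_neq0 c (n - k) poles_c). pose proof (cpoch_neq0 _ n poles_r1).
  pose proof (INR_add_pos_neq0 k 2 Rlt_0_2).
  assert ((INR k + s)%C <> 0) by (rewrite Cplus_comm; assumption).
  unfold scale, X. field. repeat split; assumption.
Qed.

Lemma rhs_sum_beta_vandermonde :
  rhs_sum n r s = (scale * (X * fst (beta_vandermonde n sigma (dual_add sigma gamma) 1)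
                            + snd (beta_vandermonde n sigma (dual_add sigma gamma) 1)))%C.
Proof.
  unfold rhs_sum, beta_vandermonde.
  rewrite dual_sum_fst, dual_sum_snd, <- Csum_mull, <- Csum_plus, <- Csum_mull, Csum_minus.
  apply Csum_ext. intros k Hk.
  assert (Hbinom : Cbinom (INR k + r) (INR k + s)
    = (CGamma (r + 1) * cpoch (r + 1) k / (CGamma (s + 1) * cpoch (s + 1) k * CGamma c))%C).
  { pose proof (Cbinom_add_nat r s k 0 poles_r1 poles_s1 poles_c) as E.
    rewrite Nat.add_0_r in E. cbn [cpoch] in E. rewrite Cmult_1_r in E. exact E. }
  assert (Hsum : dual_add (dual_add sigma gamma) (dualR (INR k)) = (r + 1 + INR k, RtoC 0)%C).
  { unfold sigma, gamma, c, dual_add, dualR. cbn [fst snd]. f_equal; ring. }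
  assert (Hsplit : cpoch (r + 1) n = (cpoch (r + 1) k * cpoch (r + 1 + INR k) (n - k))%C).
  { rewrite <- cpoch_add. f_equal. lia. }
  rewrite Hbinom, CH_nat_add_s, Hsum, dual_poch_real.
  unfold sigma. rewrite dual_poch_pair by exact poles_s.
  unfold dual_mul, dualR. cbn [fst snd].
  rewrite RtoC_mult, RtoC_beta_int_1, (cpoch_add1 s k hs0), (recip_sum_add1 s k).
  unfold scale, X. rewrite Hsplit.
  pose proof (poles_s k). pose proof (cpoch_neq0 s k poles_s).
  pose proof (cpoch_neq0 _ k poles_r1).
  pose proof (cpoch_neq0 _ (n - k) (off_poles_add_nat _ k poles_r1)).
  pose proof (INR_add_pos_neq0 k 1 Rlt_0_1). pose proof (INR_add_pos_neq0 k 2 Rlt_0_2).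
  assert ((INR k + s)%C <> 0) by (rewrite Cplus_comm; assumption).
  field. repeat split; assumption.
Qed.

End Theorem24.

Theorem theorem24 (n : nat) (r s : C)
  (hr : ~ is_neg_int r) (hs : ~ is_neg_int s) (hs0 : s <> RtoC 0)
  (hrs : ~ is_neg_int (Cminus r s)) :
  let nk := fun k : nat => RtoC (Binomial.C n k) in
  let K := fun k : nat => RtoC (INR k) in
  let sg := fun k : nat => RtoC ((-1) ^ k)%R in
  Cminus
    (Csum n (fun k => Cdiv (Cmult (nk k)
        (Cminus (CH (Cplus (K k) s)) (CH (Cminus (Cplus (Cminus (K n) (K k)) r) s))))
      (Cmult (Cmult (Cplus (K k) (RtoC 2)) (Cplus (K k) s))
             (Cbinom (Cplus (K n) r) (Cplus (K k) s)))))
    (Csum n (fun k => Cdiv (nk k)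
      (Cmult (Cmult (Cplus (K k) (RtoC 2)) (Cmult (Cplus (K k) s) (Cplus (K k) s)))
             (Cbinom (Cplus (K n) r) (Cplus (K k) s)))))
  =
  Cminus
    (Csum n (fun k => Cdiv (Cmult (Cmult (nk k) (sg k))
        (Cminus (CH (Cplus (K k) s)) (CH (Cminus r s))))
      (Cmult (Cmult (Cmult (Cplus (K k) (RtoC 1)) (Cplus (K k) (RtoC 2))) (Cplus (K k) s))
             (Cbinom (Cplus (K k) r) (Cplus (K k) s)))))
    (Csum n (fun k => Cdiv (Cmult (nk k) (sg k))
      (Cmult (Cmult (Cmult (Cplus (K k) (RtoC 1)) (Cplus (K k) (RtoC 2)))
                    (Cmult (Cplus (K k) s) (Cplus (K k) s)))
             (Cbinom (Cplus (K k) r) (Cplus (K k) s))))).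
Proof.
  change (lhs_sum n r s = rhs_sum n r s).
  destruct (classic (CGamma (r + 1) = 0 \/ CGamma (s + 1) = 0 \/ CGamma (r - s + 1) = 0))
    as [Hzero|Hnonzero].
  - apply theorem24_degenerate; assumption.
  - rewrite lhs_sum_weighted_vandermonde, rhs_sum_beta_vandermonde, weighted_vandermonde_beta
      by (assumption || tauto).
    reflexivity.
Qed.
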